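(* Let $X$ be a nonempty set and $d$ a triangular symmetric on $X$ such that $(X,d)$ is 0-complete. Let $T:X\to X$, $G\in\{M_1,M_2\}$, and suppose $d(Tx,Ty)\le\varphi(G(x,y))$ for all $x,y\in X$, for some asymptotic normal function $\varphi:[0,\infty)\to[0,\infty)$. Then $T$ is $d$-asymptotic, i.e. $\lim_n d(T^nx,T^{n+1}x)=0$ for every $x\in X$.
   Context: A symmetric on $X$ is a map $d:X\times X\to[0,\infty)$ with $d(x,y)=d(y,x)$; it is triangular if $d(x,z)\le d(x,y)+d(y,z)$ for all $x,y,z$. A sequence $(x_n)$ $0d$-converges to $x$ if $d(x_n,x)\to0$; it is $0d$-Cauchy if for every $\varepsilon>0$ there is $j$ with $d(x_m,x_n)<\varepsilon$ whenever $j\le m<n$; $(X,d)$ is 0-complete if every $0d$-Cauchy sequence $0d$-converges to some point. Notation: $M_1(x,y)=d(x,y)$, $H(x,y)=\max\{d(x,Tx),d(y,Ty)\}$, $M_2=\max\{M_1,H\}$. $\varphi$ is normal if $\varphi(0)=0$ and $\varphi(t)<t$ for $t>0$; asymptotic normal if normal and every sequence $(r_n)$ in $[0,\infty)$ with $r_{n+1}\le\varphi(r_n)$ for all $n$ tends to $0$. *)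

From Stdlib Require Import Reals.
Open Scope R_scope.

Definition symmetric_on {X : Type} (d : X -> X -> R) : Prop :=
  (forall x y, 0 <= d x y) /\ (forall x y, d x y = d y x).

Definition triangular {X : Type} (d : X -> X -> R) : Prop :=
  forall x y z, d x z <= d x y + d y z.

Definition zero_d_converges {X : Type} (d : X -> X -> R) (u : nat -> X) (x : X) : Prop :=
  Un_cv (fun n => d (u n) x) 0.

Definition zero_d_Cauchy {X : Type} (d : X -> X -> R) (u : nat -> X) : Prop :=
  forall eps, eps > 0 -> exists j : nat, forall m n : nat, (j <= m)%nat -> (m < n)%nat ->
    d (u m) (u n) < eps.

Definition zero_complete {X : Type} (d : X -> X -> R) : Prop :=
  forall u : nat -> X, zero_d_Cauchy d u -> exists x, zero_d_converges d u x.

Definition M1 {X : Type} (d : X -> X -> R) (x y : X) : R := d x y.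
Definition Hd {X : Type} (d : X -> X -> R) (T : X -> X) (x y : X) : R :=
  Rmax (d x (T x)) (d y (T y)).
Definition M2 {X : Type} (d : X -> X -> R) (T : X -> X) (x y : X) : R :=
  Rmax (M1 d x y) (Hd d T x y).

(* phi : [0,oo) -> [0,oo), modelled as R -> R with values in [0,oo) on [0,oo) *)
Definition maps_nonneg (phi : R -> R) : Prop := forall t, 0 <= t -> 0 <= phi t.

Definition normal (phi : R -> R) : Prop :=
  phi 0 = 0 /\ forall t, t > 0 -> phi t < t.

Definition asymptotic_normal (phi : R -> R) : Prop :=
  normal phi /\
  forall r : nat -> R, (forall n, 0 <= r n) -> (forall n, r (S n) <= phi (r n)) ->
    Un_cv r 0.

Definition d_asymptotic {X : Type} (d : X -> X -> R) (T : X -> X) : Prop :=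
  forall x, Un_cv (fun n => d (Nat.iter n T x) (Nat.iter (S n) T x)) 0.

From Stdlib Require Import Reals Lra.
Open Scope R_scope.

(* Along an orbit, [G (T^n x) (T^(n+1) x)] is controlled by [d (T^n x) (T^(n+1) x)]
   alone: for [M2] the only other candidate for the maximum is the next step
   [d (T^(n+1) x) (T^(n+2) x)], and it cannot be the maximum because
   [phi t < t] for [t > 0].  Hence the step lengths satisfy [r (n+1) <= phi (r n)],
   which tends to 0 by asymptotic normality. *)

Lemma normal_le_phi_max (phi : R -> R) (s t : R) :
  normal phi -> 0 <= s -> t <= phi (Rmax s t) -> t <= phi s.
Proof.
  intros [_ phi_lt] s_ge0 t_le.
  destruct (Rle_dec t s) as [t_le_s | s_lt_t].
  - now rewrite Rmax_left in t_le.
  - rewrite Rmax_right in t_le by lra.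
    specialize (phi_lt t ltac:(lra)); lra.
Qed.

Lemma M2_step {X : Type} (d : X -> X -> R) (T : X -> X) (a : X) :
  M2 d T a (T a) = Rmax (d a (T a)) (d (T a) (T (T a))).
Proof.
  unfold M2, M1, Hd.
  rewrite Rmax_assoc, (Rmax_left (d a (T a))); lra.
Qed.

Lemma step_contraction {X : Type} (d : X -> X -> R) (T : X -> X)
    (G : X -> X -> R) (phi : R -> R) :
  (forall x y, 0 <= d x y) -> normal phi -> (G = M1 d \/ G = M2 d T) ->
  (forall x y, d (T x) (T y) <= phi (G x y)) ->
  forall a, d (T a) (T (T a)) <= phi (d a (T a)).
Proof.
  intros d_ge0 phi_normal [-> | ->] contr a.
  - exact (contr a (T a)).
  - apply normal_le_phi_max; [exact phi_normal | apply d_ge0 |].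
    rewrite <- M2_step; apply contr.
Qed.

Lemma d_asymptotic_of_step_contraction {X : Type} (d : X -> X -> R)
    (T : X -> X) (phi : R -> R) :
  (forall x y, 0 <= d x y) -> asymptotic_normal phi ->
  (forall a, d (T a) (T (T a)) <= phi (d a (T a))) ->
  d_asymptotic d T.
Proof.
  intros d_ge0 [_ phi_asymptotic] step x.
  apply phi_asymptotic.
  - intros n; apply d_ge0.
  - intros n; exact (step (Nat.iter n T x)).
Qed.

Theorem lemma5 (X : Type) (x0 : X) (d : X -> X -> R) (T : X -> X)
  (G : X -> X -> R) (phi : R -> R) :
  symmetric_on d -> triangular d -> zero_complete d ->
  (G = M1 d \/ G = M2 d T) ->
  maps_nonneg phi -> asymptotic_normal phi ->
  (forall x y, d (T x) (T y) <= phi (G x y)) ->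
  d_asymptotic d T.
Proof.
  intros [d_ge0 _] _ _ HG _ phi_asn contr.
  apply (d_asymptotic_of_step_contraction d T phi d_ge0 phi_asn).
  exact (step_contraction d T G phi d_ge0 (proj1 phi_asn) HG contr).
Qed.
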